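(* Let $\pi_1,\pi_2,\pi_3,\pi_4$ be paths of length $\ell$ in a simple graph such that $V(\pi_3)\cap V(\pi_4)\neq\emptyset$, $|E(\pi_3)\cup E(\pi_4)|=2\ell-j$ and $|(E(\pi_1)\cup E(\pi_2))\cap(E(\pi_3)\cup E(\pi_4))|=j'$, where $0\le j\le\ell$ and $1\le j'\le 2\ell-j$. Then $$|V(\pi_3)\cap V(\pi_4)|+|(V(\pi_3)\cup V(\pi_4))\cap(V(\pi_1)\cup V(\pi_2))|\ge j+j'+2.$$
   Context: A path of length $\ell$ is a sequence $(v_0,\dots,v_\ell)$ of distinct vertices with edges $(v_{i-1},v_i)$; $V(\pi)$ and $E(\pi)$ denote its vertex and edge sets. *)

From mathcomp Require Import all_boot.
Set Implicit Arguments. Unset Strict Implicit. Unset Printing Implicit Defensive.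

Definition simple_graph (T : finType) (e : rel T) : Prop :=
  irreflexive e /\ symmetric e.

Definition steps (T : Type) (p : seq T) : seq (T * T) := zip p (behead p).

Definition is_path (T : finType) (e : rel T) (l : nat) (p : seq T) : Prop :=
  [/\ size p = l.+1, uniq p & all (fun x => e x.1 x.2) (steps p)].

Definition Vp (T : finType) (p : seq T) : {set T} := [set v in p].

(* E(pi): the set of edges {v_{i-1}, v_i}; an (undirected) edge is
   represented as the 2-element set of its endpoints. *)
Definition Ep (T : finType) (p : seq T) : {set {set T}} :=
  [set [set x.1; x.2] | x in steps p].

(* Let F be the set of common edges and S the set of their endpoints, so that
   S lies in both vertex sets.  The union U of the vertices of pi_3 and pi_4 is
   connected by the edges E of pi_3 and pi_4, since the two paths meet.  Growing
   S one vertex at a time along E until it exhausts U uses a new edge outside F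
   at each step, so |U| - |S| <= |E| - |F|.  Since |U| = 2l + 2 - |V_3 ∩ V_4|,
   |E| = 2l - j and |F| = j', this gives |S| >= j + j' + 2 - |V_3 ∩ V_4|. *)
From mathcomp Require Import all_boot zify.
Set Implicit Arguments. Unset Strict Implicit. Unset Printing Implicit Defensive.

Section EdgeConnectivity.
Variable T : finType.
Implicit Types (E F : {set {set T}}) (S V : {set T}).

Definition edge_connected E V :=
  forall S, S != set0 -> S \subset V -> ~~ (V \subset S) ->
  exists x y, [/\ [set x; y] \in E, x \in S, y \in V & y \notin S].

Lemma edge_connectedI E V S :
  edge_connected E V -> S :&: V != set0 -> ~~ (V \subset S) ->
  exists x y, [/\ [set x; y] \in E, x \in S, y \in V & y \notin S].
Proof.
move=> conV SV0 VnS.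
have VnSV : ~~ (V \subset S :&: V) by rewrite subsetI subxx andbT.
have [x [y [xyE]]] := conV _ SV0 (subsetIr S V) VnSV.
by rewrite !inE => /andP [xS _] yV; rewrite yV andbT => yS; exists x, y.
Qed.

Lemma edge_connectedU E1 E2 V1 V2 :
  edge_connected E1 V1 -> edge_connected E2 V2 -> V1 :&: V2 != set0 ->
  edge_connected (E1 :|: E2) (V1 :|: V2).
Proof.
move=> con1 con2 V12 S S0 SV /subsetPn [z zV zS].
wlog zV1 : E1 E2 V1 V2 con1 con2 V12 SV zV / z \in V1.
  move=> hyp; case/setUP: (zV) => [zV1 | zV2]; first exact: hyp.
  rewrite (setUC E1) (setUC V1); apply: (hyp E2 E1 V2 V1) => //;
  by rewrite 1?setIC 1?setUC.
have [c] := set0Pn _ V12; rewrite inE => /andP [cV1 cV2].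
have [s sS] := set0Pn _ S0.
have meet V v : v \in S -> v \in V -> S :&: V != set0.
  by move=> vS vV; apply/set0Pn; exists v; rewrite inE vS.
have miss V v : v \notin S -> v \in V -> ~~ (V \subset S).
  by move=> vS vV; apply/subsetPn; exists v.
have lift E V : E \subset E1 :|: E2 -> V \subset V1 :|: V2 ->
  (exists x y, [/\ [set x; y] \in E, x \in S, y \in V & y \notin S]) ->
  exists x y, [/\ [set x; y] \in E1 :|: E2, x \in S, y \in V1 :|: V2 & y \notin S].
  move=> EE VV [x [y [xyE xS yV yS]]].
  by exists x, y; split; [apply: (subsetP EE) | | apply: (subsetP VV) |].
have [cS | cS] := boolP (c \in S).
  apply: lift (subsetUl _ _) (subsetUl _ _) _.
  exact: edge_connectedI con1 (meet _ _ cS cV1) (miss _ _ zS zV1).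
have /setUP [sV1 | sV2] := subsetP SV s sS.
  apply: lift (subsetUl _ _) (subsetUl _ _) _.
  exact: edge_connectedI con1 (meet _ _ sS sV1) (miss _ _ cS cV1).
apply: lift (subsetUr _ _) (subsetUr _ _) _.
exact: edge_connectedI con2 (meet _ _ sS sV2) (miss _ _ cS cV2).
Qed.

(* Adding to S the far endpoint of a crossing edge moves that edge inside S. *)
Lemma card_setD_le_edges_leaving E V S :
  edge_connected E V -> S != set0 -> S \subset V ->
  #|V :\: S| <= #|[set f in E | ~~ (f \subset S)]|.
Proof.
move=> conV; move Hn: #|V :\: S| => n.
elim: n S Hn => [// | n IHn] S Hn S0 SV.
have VnS : ~~ (V \subset S).
  by apply/negP; rewrite -setD_eq0 => /eqP VS; rewrite VS cards0 in Hn.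
have [x [y [xyE xS yV yS]]] := conV S S0 SV VnS.
have Hn' : #|V :\: (y |: S)| = n.
  move: (cardsD1 y (V :\: S)); rewrite Hn !inE yV yS /= => -[->].
  by apply: eq_card => v; rewrite !inE negb_or andbA [_ && (v \in V)]andbC.
have yS0 : y |: S != set0 by apply/set0Pn; exists y; rewrite !inE eqxx.
have ySV : y |: S \subset V by rewrite subUset sub1set yV SV.
apply: leq_ltn_trans (IHn _ Hn' yS0 ySV) _; apply: proper_card; apply/properP; split.
  apply/subsetP => f; rewrite !inE => /andP [-> /negP fS]; apply/negP => fSy.
  by apply: fS; apply: subset_trans fSy (subsetUr _ _).
exists [set x; y]; rewrite !inE xyE /=.
  by apply: contra yS => /subsetP /(_ y); rewrite !inE eqxx orbT => /(_ isT).
by rewrite negbK subUset !sub1set !inE eqxx xS !orbT.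
Qed.

Lemma card_le_cover_edges E F V :
  edge_connected E V -> {in E, forall f : {set T}, f \subset V} -> F \subset E ->
  cover F != set0 -> #|V| + #|F| <= #|cover F| + #|E|.
Proof.
move=> conV EV FE F0.
have FV : cover F \subset V.
  by apply/bigcupsP => f fF; apply: EV; apply: (subsetP FE).
have leaving : [set f in E | ~~ (f \subset cover F)] \subset E :\: F.
  apply/subsetP => f; rewrite !inE => /andP [-> fF]; rewrite andbT.
  by apply: contra fF => /bigcup_sup; apply.
have := leq_trans (card_setD_le_edges_leaving conV F0 FV) (subset_leq_card leaving).
rewrite !cardsD (setIidPr FV) (setIidPr FE).
have := subset_leq_card FV; have := subset_leq_card FE; lia.
Qed.

End EdgeConnectivity.

Section PathEdges.
Variable T : finType.
Implicit Types (p : seq T) (S : {set T}).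

Lemma mem_steps p x : x \in steps p -> (x.1 \in p) && (x.2 \in p).
Proof.
elim: p => [|a [|b r] IHp] //; rewrite /steps /= in IHp *.
rewrite in_cons => /orP [/eqP -> | /IHp /andP [x1 x2]] /=.
  by rewrite !in_cons !eqxx orbT.
by rewrite in_cons x1 in_cons x2 !orbT.
Qed.

Lemma Ep_sub_Vp p f : f \in Ep p -> f \subset Vp p.
Proof.
case/imsetP => x /mem_steps /andP [x1 x2] ->.
by rewrite subUset !sub1set !inE x1 x2.
Qed.

Lemma Ep_neq0 p f : f \in Ep p -> f != set0.
Proof. by case/imsetP => x _ ->; apply/set0Pn; exists x.1; rewrite setU11. Qed.

Lemma Ep_cons (a b : T) r : Ep [:: a, b & r] = [set a; b] |: Ep (b :: r).
Proof.
apply/setP => f; rewrite in_setU1; apply/imsetP/orP => [[x] | [/eqP -> | /imsetP [x xs ->]]].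
- by rewrite in_cons => /orP [/eqP -> -> | xs ->]; [left | right; apply: imset_f].
- by exists (a, b); rewrite // /steps /= in_cons eqxx.
- by exists x; rewrite // /steps /= in_cons xs orbT.
Qed.

Lemma Ep_crossing p S :
  has (mem S) p -> ~~ all (mem S) p ->
  exists x y, [/\ [set x; y] \in Ep p, x \in S & y \notin S].
Proof.
elim: p => [|a [|b r] IHp] //=; first by rewrite orbF andbT => ->.
have liftE x y : [set x; y] \in Ep (b :: r) -> [set x; y] \in Ep [:: a, b & r].
  by rewrite Ep_cons inE orbC => ->.
have abE : [set a; b] \in Ep [:: a, b & r] by rewrite Ep_cons setU11.
have [aS | aS] := boolP (a \in S); have [bS | bS] := boolP (b \in S).
- move=> _ nall; have /IHp : has (mem S) (b :: r) by rewrite /= bS.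
  case=> [|x [y [xyE xS yS]]]; first by rewrite /= bS.
  by exists x, y; split; first exact: liftE.
- by move=> _ _; exists a, b.
- by move=> _ _; exists b, a; rewrite setUC.
- move=> hasS _; have /IHp : has (mem S) (b :: r) by rewrite /= (negbTE bS).
  case=> [|x [y [xyE xS yS]]]; first by rewrite /= (negbTE bS).
  by exists x, y; split; first exact: liftE.
Qed.

Lemma Ep_edge_connected p : edge_connected (Ep p) (Vp p).
Proof.
move=> S /set0Pn [s sS] SV VnS.
have hasS : has (mem S) p by apply/hasP; exists s; rewrite // -[s \in p]inE (subsetP SV).
have nall : ~~ all (mem S) p.
  by apply: contra VnS => /allP pS; apply/subsetP => v; rewrite inE => /pS.
have [x [y [xyE xS yS]]] := Ep_crossing hasS nall.
exists x, y; split=> //; apply: (subsetP (Ep_sub_Vp xyE)).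
by rewrite !inE eqxx orbT.
Qed.

Lemma card_Vp (e : rel T) l p : is_path e l p -> #|Vp p| = l.+1.
Proof. by case=> sz up _; rewrite /Vp cardsE (card_uniqP up). Qed.

End PathEdges.

Theorem lemma3p8 (T : finType) (e : rel T) (l j j' : nat)
    (p1 p2 p3 p4 : seq T) :
  simple_graph e ->
  is_path e l p1 -> is_path e l p2 -> is_path e l p3 -> is_path e l p4 ->
  Vp p3 :&: Vp p4 != set0 ->
  #|Ep p3 :|: Ep p4| = 2 * l - j ->
  #|(Ep p1 :|: Ep p2) :&: (Ep p3 :|: Ep p4)| = j' ->
  j <= l -> 1 <= j' <= 2 * l - j ->
  #|Vp p3 :&: Vp p4| + #|(Vp p3 :|: Vp p4) :&: (Vp p1 :|: Vp p2)| >= j + j' + 2.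
Proof.
move=> _ _ _ P3 P4 meet34 cardE cardF jl /andP [j'gt0 _].
set F := (Ep p1 :|: Ep p2) :&: (Ep p3 :|: Ep p4).
have conU := edge_connectedU (Ep_edge_connected (p := p3)) (Ep_edge_connected (p := p4)) meet34.
have EU : {in Ep p3 :|: Ep p4, forall f : {set T}, f \subset Vp p3 :|: Vp p4}.
  move=> f /setUP [] /Ep_sub_Vp fV; apply: subset_trans fV _;
  [exact: subsetUl | exact: subsetUr].
have coverW : cover F \subset Vp p1 :|: Vp p2.
  apply/bigcupsP => f; rewrite inE => /andP [/setUP [] /Ep_sub_Vp fV _];
  apply: subset_trans fV _; [exact: subsetUl | exact: subsetUr].
have F0 : cover F != set0.
  have [f fF] : exists f, f \in F by apply/set0Pn; rewrite -card_gt0 cardF.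
  have [v fv] : exists v, v \in f by case/setIP: fF => /setUP [] /Ep_neq0 /set0Pn.
  by apply/set0Pn; exists v; apply/bigcupP; exists f.
have coverU : cover F \subset Vp p3 :|: Vp p4 by apply/bigcupsP => f /setIP [_ /EU].
have := card_le_cover_edges conU EU (subsetIr _ _) F0.
have coverUW : cover F \subset (Vp p3 :|: Vp p4) :&: (Vp p1 :|: Vp p2).
  by rewrite subsetI coverU coverW.
have := subset_leq_card coverUW.
have := cardsUI (Vp p3) (Vp p4); rewrite (card_Vp P3) (card_Vp P4).
rewrite -/F cardE cardF; lia.
Qed.
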